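(* Let $\mathbf{X}=\{X_n\}_{n\ge 0}$ be a real-valued integrable process adapted to the filtration $\{\mathcal{F}_n\}_{n\ge0}$, and suppose $\mathbf{X}$ satisfies (A1) and (A4). Then: (i) $X_n\,I\{N_T<\infty\}$ possesses a finite limit a.e. as $n\to\infty$; (ii) if in addition (A2) holds, then $X_n\,I\{N_T<\infty\}\to 0$ a.e.; (iii) a.e., $\limsup_n |X_n|\,I\{N_T=\infty\}\le \limsup_n |U_n|$; (iv) if in addition (A3) holds, then $\lim_n X_n\,I\{N_T=\infty\}=0$ a.e.
   Context: Let $(\Omega,\mathcal{F},P)$ be a probability space with filtration $\mathcal{F}_0\subset\mathcal{F}_1\subset\cdots\subset\mathcal{F}$, and let $\mathbf{X}=\{X_n:n\ge0\}$ be an adapted process with $E|X_n|<\infty$ for all $n$. Residuals: $\epsilon_n=X_n-E[X_n\mid\mathcal{F}_{n-1}]$, $n\ge1$; partial sums $M_{s,t}=\sum_{i=s}^t\epsilon_i$ for $t\ge s\ge1$. $U_n=E[X_n\mid\mathcal{F}_{n-1}]\,I\{X_{n-1}=0\}$, $n\ge1$. Events: $D^+_n=\{X_n>0\}$, $D^-_n=\{X_n<0\}$, $D^0_n=\{X_n=0\}$ for $n\ge0$, and for $n\ge1$, $D_n=D^+_n(D^+_{n-1})^c\cup D^-_n(D^-_{n-1})^c\cup D^0_n(D^0_{n-1})^c$ (a ''crossing'' at time $n$). For $j\ge1$ define $T_j=\inf\{t\ge1:\sum_{i=1}^t I\{D_i\}\ge j\}$ (with $\inf\emptyset=\infty$),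 and $N_T=\sup\{j\ge1:T_j<\infty\}$ (with $N_T=0$ if $T_1=\infty$). Assumptions: (A1) There are constants $\alpha_n\ge0$ with $\sum_n\alpha_n<\infty$ such that a.e., for all $n\ge1$: $0\le \frac{E[X_n\mid\mathcal{F}_{n-1}]}{X_{n-1}}I\{X_{n-1}\ne0\}\le 1+\alpha_n$. (A2) There are constants $0\le k_n\le1$ with $\sum_n(1-k_n)=\infty$ such that a.e., for all $n\ge1$: $0\le \frac{E[X_n\mid\mathcal{F}_{n-1}]}{X_{n-1}}I\{X_{n-1}\ne0\}\le k_n$. (A3) $\lim_n U_n=0$ a.e. (A4) $M_{1,n}$ possesses a finite limit a.e. as $n\to\infty$. *)

From HB Require Import structures.
From mathcomp Require Import all_boot all_order all_algebra.
From mathcomp Require Import all_classical all_reals all_analysis.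
Set Implicit Arguments. Unset Strict Implicit. Unset Printing Implicit Defensive.
Import Order.TTheory GRing.Theory Num.Theory.
Import numFieldNormedType.Exports.
Local Open Scope classical_set_scope.
Local Open Scope ring_scope.

Section Defs.
Context {d : measure_display} {T : measurableType d} {R : realType}.

Definition sub_sigma (G : set (set T)) : Prop :=
  sigma_algebra setT G /\ G `<=` measurable.

Definition filtration (F : nat -> set (set T)) : Prop :=
  (forall n, sub_sigma (F n)) /\ (forall n, F n `<=` F n.+1).

Definition G_measurable (G : set (set T)) (f : T -> R) : Prop :=
  forall B : set R, measurable B -> G (f @^-1` B).

Definition cond_exp_version (P : probability T R) (G : set (set T))
    (X Y : T -> R) : Prop :=
  G_measurable G Y /\ P.-integrable setT (EFin \o Y) /\
  forall A, G A -> (\int[P]_(x in A) (Y x)%:E = \int[P]_(x in A) (X x)%:E)%E.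

(* residuals eps_n = X_n - E[X_n | F_{n-1}], with Ec n a version of E[X_n|F_{n-1}] *)
Definition resid (X Ec : nat -> T -> R) (n : nat) (x : T) : R := X n x - Ec n x.

Definition Msum (X Ec : nat -> T -> R) (n : nat) (x : T) : R :=
  \sum_(1 <= i < n.+1) resid X Ec i x.

Definition Useq (X Ec : nat -> T -> R) (n : nat) (x : T) : R :=
  Ec n x * (X n.-1 x == 0)%:R.

Definition crossing (X : nat -> T -> R) (n : nat) (x : T) : bool :=
  [|| (0 < X n x) && ~~ (0 < X n.-1 x),
      (X n x < 0) && ~~ (X n.-1 x < 0) |
      (X n x == 0) && ~~ (X n.-1 x == 0)].

(* T_j(x) < oo : exists t >= 1 with sum_{i=1}^t I{D_i} >= j *)
Definition Tj_finite (X : nat -> T -> R) (j : nat) (x : T) : Prop :=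
  exists t : nat, (1 <= t)%N /\ (j <= \sum_(1 <= i < t.+1) crossing X i x)%N.

(* N_T(x) < oo : sup {j >= 1 : T_j(x) < oo} is finite (N_T = 0 if the set is empty) *)
Definition NT_finite (X : nat -> T -> R) (x : T) : Prop :=
  exists N : nat, forall j : nat, (1 <= j)%N -> Tj_finite X j x -> (j <= N)%N.

End Defs.

From HB Require Import structures.
From mathcomp Require Import all_boot all_order all_algebra.
From mathcomp Require Import all_classical all_reals all_analysis.
From mathcomp Require Import ring lra zify.
Import Order.TTheory GRing.Theory Num.Theory.
Import numFieldNormedType.Exports.
Local Open Scope classical_set_scope.
Local Open Scope ring_scope.

(* Every hypothesis and every conclusion of Theorem 1 is an almost-sure
   statement, so the theorem is proved one sample path at a time: for a fixed
   outcome w we study the real sequences x n = X_n(w) and c n = E[X_n|F_{n-1}](w),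
   with innovations x n - c n whose partial sums M converge by (A4).
   - Sign changes: between two crossings the sign of x is constant, and
     N_T(w) is finite exactly when x has finitely many crossings.
   - Positive runs: while x > 0, (A1) gives 0 <= c (n+1) <= (1 + a (n+1)) x n, and
     a discrete Gronwall argument bounds x along the run in terms of its start,
     the oscillation of M and the tail of the series of a.  On an eventually
     positive path x is therefore bounded, x n - C (a_1 + ... + a_(n+1)) - M n is
     eventually nonincreasing and bounded below, so x converges; under (A2)
     the limit must be 0 since the series of 1 - k diverges.
   - Runs opened by a crossing start below |U| + |innovation|, so when crossings
     recur forever x is eventually below limsup |U| + eta for every eta > 0.
   Negative runs are reduced to positive ones through the path -x.  The theorem
   then follows by splitting, for almost every w, on whether N_T(w) < oo. *)

Section RealSequences.
Context {R : realType}.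
Implicit Types (u : nat -> R) (d : R).

Lemma cvgn_near_lim {u d} : cvgn u -> 0 < d ->
  exists N, forall n, (N <= n)%N -> `|limn u - u n| <= d.
Proof.
move/cvgrPdist_le => cu /cu [N _ HN].
by exists N => n hn; apply: HN.
Qed.

Lemma cvgn_cauchy {u d} : cvgn u -> 0 < d ->
  exists N, forall s n, (N <= s)%N -> (N <= n)%N -> `|u n - u s| <= d.
Proof.
move=> cu d0; have d20 : 0 < d / 2 by lra.
have [N HN] := cvgn_near_lim cu d20.
exists N => s n hs hn; have h1 := HN s hs; have h2 := HN n hn.
have -> : u n - u s = (limn u - u s) - (limn u - u n) by lra.
apply: (le_trans (ler_normB _ _)); lra.
Qed.

Lemma cvgn_eventually_bounded {u} : cvgn u ->
  exists B N, forall n, (N <= n)%N -> `|u n| <= B.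
Proof.
move=> cu; have [N HN] := cvgn_near_lim cu ltr01.
exists (`|limn u| + 1), N => n hn; have h := HN n hn.
have -> : u n = limn u - (limn u - u n) by lra.
apply: (le_trans (ler_normB _ _)); lra.
Qed.

Lemma is_cvg_succ u : cvgn u -> cvgn (fun n => u n.+1).
Proof.
move=> cu; apply/cvg_ex; exists (limn u).
have -> : (fun n => u n.+1) = [sequence u (n + 1)%N]_n.
  by apply/funext => n; rewrite /= addn1.
by rewrite cvg_shiftn.
Qed.

Lemma is_cvg_from_shift u s : cvgn (fun k => u (k + s)%N) -> cvgn u.
Proof. by case/cvg_ex => l hl; apply/cvg_ex; exists l; rewrite -(cvg_shiftn s). Qed.

Lemma nonincreasing_from u s : (forall n, (s <= n)%N -> u n.+1 <= u n) ->
  forall n, (s <= n)%N -> u n <= u s.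
Proof.
move=> h; elim=> [|n IH]; first by rewrite leqn0 => /eqP ->.
rewrite leq_eqVlt => /orP[/eqP <-|hn]; first by [].
exact: le_trans (h n hn) (IH hn).
Qed.

Lemma series_le_lim {a : nat -> R} : (forall n, 0 <= a n) -> cvgn (series a) ->
  forall n, series a n <= limn (series a).
Proof.
move=> a0 ca n; apply: nondecreasing_cvgn_le => //.
by apply: nondecreasing_series => k _ _; exact: a0.
Qed.

Lemma series_tail_small {a : nat -> R} {d} : (forall n, 0 <= a n) ->
  cvgn (series a) -> 0 < d ->
  exists N, forall s n, (N <= s)%N -> series a n - series a s <= d.
Proof.
move=> a0 ca d0; have [N HN] := cvgn_near_lim ca d0; exists N => s n hs.
have h1 := HN s hs; have h2 := series_le_lim a0 ca n.
have h3 := ler_norm (limn (series a) - series a s); lra.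
Qed.

(* The one-step inequality of the discrete Gronwall argument for positive runs:
   if Q/(1 - A) bounds the current value, Q/(1 - (A + a)) bounds the next one. *)
Lemma gronwall_step {Q a A : R} : 0 <= Q -> 0 <= a -> 0 <= A -> A + a < 1 ->
  (1 + a) * (Q / (1 - A)) <= Q / (1 - (A + a)).
Proof.
move=> Q0 a0 A0 Aa1.
have d1 : 0 < 1 - A by lra.
have d2 : 0 < 1 - (A + a) by lra.
rewrite ler_pdivlMr // mulrC mulrA.
have -> : (1 - (A + a)) * ((1 + a) * Q / (1 - A)) =
   ((1 - (A + a)) * (1 + a)) * (Q / (1 - A)) by rewrite !mulrA.
have h : (1 - (A + a)) * (1 + a) <= 1 - A by nra.
apply: (le_trans (ler_wpM2r _ h)); first by rewrite divr_ge0 // ltW.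
by rewrite mulrC divfK // gt_eqF.
Qed.

End RealSequences.

Section LimsupBounds.
Context {R : realType}.
Local Open Scope ereal_scope.

Lemma limn_esup_le_eventually {u : (\bar R)^nat} {r : \bar R} N :
  (forall n, (N <= n)%N -> u n <= r) -> limn_esup u <= r.
Proof.
move=> h; rewrite /limn_esup limf_esupE.
apply: (@le_trans _ _ (ereal_sup (u @` [set n | (N <= n)%N]))).
  by apply: ereal_inf_lbound; exists [set n | (N <= n)%N] => //; exists N.
by apply: ge_ereal_sup => _ [n hn <-]; exact: h.
Qed.

Lemma limn_esup_lt_eventually {u : (\bar R)^nat} {r : R} :
  limn_esup u < r%:E -> exists N, forall n, (N <= n)%N -> u n <= r%:E.
Proof.
rewrite /limn_esup limf_esupE => /ereal_inf_lt [_ [V [N _ hN] <-] hlt].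
exists N => n hn; apply: le_trans (ltW hlt).
by apply: ereal_sup_ubound; exists n => //; exact: hN.
Qed.

End LimsupBounds.

Section SamplePaths.
Context {R : realType}.
Implicit Types (x c : nat -> R).

Definition innov x c n := x n - c n.
Definition innov_sum x c n := \sum_(1 <= i < n.+1) innov x c i.

Lemma innov_sumS x c n : innov_sum x c n.+1 = innov_sum x c n + innov x c n.+1.
Proof. by rewrite /innov_sum big_nat_recr. Qed.

Definition restart x c n := c n * (x n.-1 == 0)%:R.

Definition sign_change x n : bool :=
  [|| (0 < x n) && ~~ (0 < x n.-1),
      (x n < 0) && ~~ (x n.-1 < 0) |
      (x n == 0) && ~~ (x n.-1 == 0)].

Definition finitely_many_changes x :=
  exists m, forall i, (m < i)%N -> ~~ sign_change x i.
Definition infinitely_many_changes x :=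
  forall m, exists i, (m < i)%N && sign_change x i.

Lemma infinitely_many_of_not {x} :
  ~ finitely_many_changes x -> infinitely_many_changes x.
Proof.
move=> notfin m; apply: contrapT => none; apply: notfin; exists m => i mi.
by apply/negP => ch; apply: none; exists i; rewrite mi ch.
Qed.

(* Crossings of -x are crossings of x; this reduces negative runs to positive ones. *)
Lemma sign_changeN x i : sign_change (fun n => - x n) i = sign_change x i.
Proof. by rewrite /sign_change !oppr_gt0 !oppr_lt0 !oppr_eq0 orbCA. Qed.

Lemma sign_kept {x n} : ~~ sign_change x n.+1 ->
  [/\ (0 < x n -> 0 < x n.+1), (x n < 0 -> x n.+1 < 0) & (x n = 0 -> x n.+1 = 0)].
Proof.
rewrite /sign_change /= !negb_or !negb_and !negbK => /and3P[h1 h2 h3].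
split=> hx.
- case: (ltgtP (x n.+1) 0) => // h.
  + by move: h2; rewrite h /= => /(lt_trans hx); rewrite ltxx.
  + by move: h3; rewrite h eqxx /= => /eqP hh; move: hx; rewrite hh ltxx.
- case: (ltgtP (x n.+1) 0) => // h.
  + by move: h1; rewrite h /= => /(lt_trans hx); rewrite ltxx.
  + by move: h3; rewrite h eqxx /= => /eqP hh; move: hx; rewrite hh ltxx.
- case: (ltgtP (x n.+1) 0) => // h.
  + by move: h2; rewrite h hx ltxx.
  + by move: h1; rewrite h hx ltxx.
Qed.

Lemma sign_constant {x m t} : (forall i, (m < i <= t)%N -> ~~ sign_change x i) ->
  forall n, (m <= n <= t)%N ->
  [/\ (0 < x m -> 0 < x n), (x m < 0 -> x n < 0) & (x m = 0 -> x n = 0)].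
Proof.
move=> hc; elim=> [|n IH]; first by rewrite leqn0 => /andP[/eqP -> _].
move=> /andP[]; rewrite leq_eqVlt => /orP[/eqP <-|hn] hnt; first by [].
have [i1 i2 i3] := IH ltac:(by rewrite -ltnS hn (ltnW hnt)).
have [j1 j2 j3] := sign_kept (hc n.+1 ltac:(by rewrite hn hnt)).
by split=> h; [apply: j1; apply: i1 | apply: j2; apply: i2 | apply: j3; apply: i3].
Qed.

Lemma sign_change_into_pos {x n} : sign_change x n.+1 -> 0 < x n.+1 -> x n <= 0.
Proof.
move=> ch xp; move: ch; rewrite /sign_change /= xp (lt_gtF xp) (gt_eqF xp) /=.
by rewrite orbF leNgt.
Qed.

Lemma sign_eventually_constant {x m} :
  (forall i, (m < i)%N -> ~~ sign_change x i) -> forall n, (m <= n)%N ->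
  [/\ (0 < x m -> 0 < x n), (x m < 0 -> x n < 0) & (x m = 0 -> x n = 0)].
Proof.
move=> hc n mn; apply: (sign_constant (t := n)); last by rewrite mn leqnn.
by move=> i /andP[mi _]; exact: hc.
Qed.

Lemma last_sign_change {x N} : sign_change x N ->
  forall n, (N <= n)%N -> exists s, [/\ (N <= s)%N, (s <= n)%N, sign_change x s &
    forall j, (s < j <= n)%N -> ~~ sign_change x j].
Proof.
move=> hN; elim=> [|n IH].
  rewrite leqn0 => /eqP hN0; subst N; exists 0%N; split => //.
  by move=> j /andP[h1 h2]; move: (leq_trans h1 h2).
rewrite leq_eqVlt => /orP[/eqP <-|hn].
  exists N; split => //.
  by move=> j /andP[h1 h2]; move: (leq_trans h1 h2); rewrite ltnn.
have [s [h1 h2 h3 h4]] := IH hn.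
case hc : (sign_change x n.+1).
  exists n.+1; split => //; first exact: ltnW.
  by move=> j /andP[h5 h6]; move: (leq_trans h5 h6); rewrite ltnn.
exists s; split => //; first exact: leqW.
move=> j /andP[h5]; rewrite leq_eqVlt => /orP[/eqP ->|h6]; first by rewrite hc.
by apply: h4; rewrite h5.
Qed.

Lemma count_changes_unbounded {x} : infinitely_many_changes x ->
  forall j, exists t, (1 <= t)%N /\ (j <= \sum_(1 <= i < t.+1) sign_change x i)%N.
Proof.
move=> Hinf; elim=> [|j [t [ht IH]]]; first by exists 1%N.
have [i /andP[hi hci]] := Hinf t.
exists i; split; first exact: leq_trans ht (ltnW hi).
rewrite (@big_cat_nat _ _ _ t.+1) //=; last exact: ltnW.
rewrite [X in (_ + X)%N]big_nat_recr //= hci.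
lia.
Qed.

Lemma count_changes_bounded {x m} : (forall i, (m < i)%N -> ~~ sign_change x i) ->
  forall t, (\sum_(1 <= i < t.+1) sign_change x i <= minn t m)%N.
Proof.
move=> h; elim=> [|t IH]; first by rewrite big_geq.
rewrite big_nat_recr //=.
case: (leqP t.+1 m) => ht.
  have : (sign_change x t.+1 <= 1)%N by case: (sign_change x t.+1).
  lia.
rewrite (negbTE (h _ ht)) addn0; lia.
Qed.

End SamplePaths.

Lemma NT_finite_changes {d : measure_display} {T : measurableType d} {R : realType}
  {X : nat -> T -> R} {w} : NT_finite X w -> finitely_many_changes (fun n => X n w).
Proof.
move=> [N HN]; apply: contrapT => /infinitely_many_of_not inf.
have [t [t1 many]] := count_changes_unbounded inf N.+1.
by have := HN N.+1 isT (ex_intro _ t (conj t1 many)); rewrite ltnn.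
Qed.

Lemma not_NT_finite_changes {d : measure_display} {T : measurableType d}
  {R : realType} {X : nat -> T -> R} {w} :
  ~ NT_finite X w -> infinitely_many_changes (fun n => X n w).
Proof.
move=> notfin; apply: infinitely_many_of_not => -[m none]; apply: notfin.
exists m => j _ [t [_ many]].
exact: leq_trans many (leq_trans (count_changes_bounded none t) (geq_minr _ _)).
Qed.

Section PositiveRuns.
Context {R : realType}.
Variables (x c a : nat -> R).
Hypothesis a_ge0 : forall n, 0 <= a n.
Hypothesis ratio_A1 : forall n, (1 <= n)%N -> x n.-1 != 0 ->
  0 <= c n / x n.-1 <= 1 + a n.

Lemma prediction_after_pos n : 0 < x n -> 0 <= c n.+1 <= (1 + a n.+1) * x n.
Proof.
move=> xp; have /andP[h1 h2] := @ratio_A1 n.+1 (ltn0Sn n) (lt0r_neq0 xp).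
have hc : c n.+1 = c n.+1 / x n * x n by rewrite divfK // gt_eqF.
by rewrite hc; apply/andP; split; [apply: mulr_ge0 | apply: ler_wpM2r] => //;
  exact: ltW.
Qed.

Lemma prediction_after_neg n : x n < 0 -> c n.+1 <= 0.
Proof.
move=> xp; have /andP[h1 h2] := @ratio_A1 n.+1 (ltn0Sn n) (ltr0_neq0 xp).
have hc : c n.+1 = c n.+1 / x n * x n by rewrite divfK // lt_eqF.
by rewrite hc mulr_ge0_le0 // ltW.
Qed.

(* Discrete Gronwall invariant along a positive run started at s: with A_k the
   drift a_(s+2) + ... + a_(s+k+1), the value x (s+k) corrected by the innovations
   since s stays below (x s + tau) / (1 - A_k). *)
Lemma positive_run_invariant {s t tau rho} :
  0 <= tau -> (forall n, (s <= n)%N -> `|innov_sum x c n - innov_sum x c s| <= tau) ->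
  0 <= x s -> (forall n, (s <= n < t)%N -> 0 < x n) -> rho < 1 ->
  (forall n, (s <= n)%N -> series a n.+1 - series a s.+1 <= rho) ->
  forall k, (s + k <= t)%N ->
  0 <= series a (s + k).+1 - series a s.+1 /\
  x (s + k) - (innov_sum x c (s + k) - innov_sum x c s) + tau <=
    (x s + tau) / (1 - (series a (s + k).+1 - series a s.+1)).
Proof.
move=> tau0 Htau xs0 Hpos rho1 Hrho.
have Q0 : 0 <= x s + tau by rewrite addr_ge0.
elim=> [|k IH] hk.
  rewrite addn0 subrr subr0 divr1; split=> //.
  by rewrite subrr subr0.
rewrite addnS in hk *.
have [A0 HA] := IH (ltnW hk).
set n := (s + k)%N in hk A0 HA *.
have xn : 0 < x n by apply: Hpos; rewrite hk leq_addr.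
have /andP[c0 c1] := prediction_after_pos n xn.
rewrite seriesSr.
set A := series a n.+1 - series a s.+1 in A0 HA *.
have eA : series a n.+1 + a n.+1 - series a s.+1 = A + a n.+1 by rewrite /A; lra.
have hrho := Hrho n.+1 (leqW (leq_addr _ _)).
rewrite seriesSr -/n eA in hrho.
have an := a_ge0 n.+1.
rewrite eA; split; first lra.
have hD := Htau n (leq_addr _ _).
have hD' := ler_norm (innov_sum x c n - innov_sum x c s).
rewrite innov_sumS /innov.
apply: (le_trans _ (gronwall_step Q0 an A0 _)); last lra.
apply: le_trans (ler_wpM2l (addr_ge0 ler01 an) HA).
set D := innov_sum x c n - innov_sum x c s in hD hD' *.
have : a n.+1 * D <= a n.+1 * tau by apply: ler_wpM2l => //; lra.
have -> : x n.+1 - (innov_sum x c n + (x n.+1 - c n.+1) - innov_sum x c s) =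
  c n.+1 - D by rewrite /D; lra.
clearbody D.
move: c1; rewrite !mulrDl !mulrDr !mul1r mulrN; lra.
Qed.

Lemma positive_run_bound s t (tau rho : R) :
  0 <= tau -> (forall n, (s <= n)%N -> `|innov_sum x c n - innov_sum x c s| <= tau) ->
  0 <= x s -> (forall n, (s <= n < t)%N -> 0 < x n) -> rho < 1 ->
  (forall n, (s <= n)%N -> series a n.+1 - series a s.+1 <= rho) ->
  forall n, (s <= n <= t)%N -> x n <= (x s + tau) / (1 - rho).
Proof.
move=> tau0 Htau xs0 Hpos rho1 Hrho n /andP[sn nt].
have hk : (s + (n - s) <= t)%N by rewrite subnKC.
have [A0 HA] := positive_run_invariant tau0 Htau xs0 Hpos rho1 Hrho _ hk.
rewrite subnKC // in A0 HA.
have hD := Htau n sn; have hA := Hrho n sn.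
have e1 : x n <= x n - (innov_sum x c n - innov_sum x c s) + tau.
  by have := ler_norm (innov_sum x c n - innov_sum x c s); lra.
apply: (le_trans e1); apply: (le_trans HA).
apply: ler_wpM2l; first by rewrite addr_ge0.
rewrite lef_pV2 ?posrE; lra.
Qed.

Lemma run_start_bound n : 0 < x n.+1 -> x n <= 0 ->
  x n.+1 <= `|restart x c n.+1| + `|innov x c n.+1|.
Proof.
rewrite /restart /innov /= => xp; rewrite le_eqVlt => /orP[/eqP x0|xn].
  rewrite x0 eqxx mulr1.
  by have := ler_norm (c n.+1); have := ler_norm (x n.+1 - c n.+1); lra.
have := prediction_after_neg n xn; have := ler_norm (x n.+1 - c n.+1).
by have := normr_ge0 (c n.+1 * (x n == 0)%:R); lra.
Qed.

Lemma A2_potential_nonincreasing {k : nat -> R} {h : R} {s} :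
  (forall n, 0 <= k n <= 1) ->
  (forall n, (1 <= n)%N -> x n.-1 != 0 -> 0 <= c n / x n.-1 <= k n) ->
  0 < h -> (forall n, (s <= n)%N -> h <= x n) ->
  forall n, (s <= n)%N ->
  x n + h * series (fun i => 1 - k i) n.+1 - innov_sum x c n <=
  x s + h * series (fun i => 1 - k i) s.+1 - innov_sum x c s.
Proof.
move=> k01 ratio_A2 h0 above; apply: nonincreasing_from => n sn.
rewrite seriesSr innov_sumS /innov.
have xh := above n sn; have xp : 0 < x n by lra.
have /andP[_ cle] : 0 <= c n.+1 <= k n.+1 * x n.
  have /andP[h1 h2] := ratio_A2 n.+1 (ltn0Sn n) (lt0r_neq0 xp).
  have -> : c n.+1 = c n.+1 / x n * x n by rewrite divfK // gt_eqF.
  by rewrite mulr_ge0 ?ler_wpM2r //= ltW.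
have /andP[k0 k1] := k01 n.+1.
have : 0 <= (1 - k n.+1) * (x n - h) by apply: mulr_ge0; lra.
nra.
Qed.

Hypothesis a_sum : cvgn (series a).
Hypothesis M_cvg : cvgn (innov_sum x c).

Lemma eventually_positive_bounded {m} : (forall n, (m <= n)%N -> 0 < x n) ->
  exists s C, (m <= s)%N /\ forall n, (s <= n)%N -> x n <= C.
Proof.
move=> Hx; have half0 : (0 : R) < 1 / 2 by lra.
have [N1 HN1] := cvgn_cauchy M_cvg ltr01.
have [N2 HN2] := series_tail_small a_ge0 a_sum half0.
set s := maxn m (maxn N1 N2).
have ms : (m <= s)%N by rewrite leq_maxl.
have N1s : (N1 <= s)%N by rewrite /s (leq_trans _ (leq_maxr _ _)) // leq_maxl.
have N2s : (N2 <= s)%N by rewrite /s (leq_trans _ (leq_maxr _ _)) // leq_maxr.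
exists s, ((x s + 1) / (1 - 1 / 2)); split => // n hn.
apply: (positive_run_bound s n 1 (1 / 2)) => //.
- by move=> k hk; apply: HN1 => //; apply: leq_trans hk.
- by apply/ltW/Hx.
- by move=> k /andP[hk _]; apply: Hx; apply: leq_trans hk.
- lra.
- by move=> k hk; apply: HN2; apply: leq_trans N2s _.
- by rewrite hn leqnn.
Qed.

(* An eventually positive path converges: with C a bound for x, the sequence
   x n - C (a_1 + ... + a_(n+1)) - M_n is eventually nonincreasing and bounded below. *)
Lemma eventually_positive_cvg {m} : (forall n, (m <= n)%N -> 0 < x n) -> cvgn x.
Proof.
move=> Hx.
have [s [C [ms HC]]] := eventually_positive_bounded Hx.
have [B [N3 HB]] := cvgn_eventually_bounded M_cvg.
set s' := maxn s N3.
have C0 : 0 <= C by apply: le_trans (HC s (leqnn _)); apply/ltW/Hx.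
pose w n := x n - C * series a n.+1 - innov_sum x c n.
have step : forall n, (s <= n)%N -> w n.+1 <= w n.
  move=> n hn; rewrite /w seriesSr innov_sumS /innov.
  have xn : 0 < x n by apply: Hx; apply: leq_trans hn.
  have /andP[_ c1] := prediction_after_pos n xn.
  have h1 := ler_wpM2l (a_ge0 n.+1) (HC n hn).
  by move: c1; rewrite mulrDl mul1r mulrDr => c1; lra.
have lb : forall n, (s' <= n)%N -> - (C * limn (series a)) - B <= w n.
  move=> n hn; have xn : 0 < x n.
    by apply: Hx; apply: leq_trans hn; apply: leq_trans (leq_maxl _ _).
  have h1 := ler_wpM2l C0 (series_le_lim a_ge0 a_sum n.+1).
  have h2 := HB n (leq_trans (leq_maxr _ _) hn).
  by have h3 := ler_norm (innov_sum x c n); rewrite /w; lra.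
have cw : cvgn w.
  apply: (@is_cvg_from_shift _ _ s'); apply: nonincreasing_is_cvgn.
    apply/nonincreasing_seqP => k /=; rewrite addSn; apply: step.
    by apply: leq_trans (leq_addl _ _); apply: leq_maxl.
  by exists (- (C * limn (series a)) - B) => _ [k _ <-]; apply: lb; apply: leq_addl.
have -> : x = w + ((fun n => C) * (fun n => series a n.+1) + innov_sum x c).
  apply/funext => n.
  change (x n = (x n - C * series a n.+1 - innov_sum x c n) +
    (C * series a n.+1 + innov_sum x c n)).
  lra.
apply: is_cvgD => //; apply: is_cvgD => //.
by apply: is_cvgM; [exact: is_cvg_cst | exact: is_cvg_succ].
Qed.

(* Under (A2) an eventually positive path tends to 0: a positive limit L would
   keep the potential of [A2_potential_nonincreasing] (with h = L/2) bounded,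
   whereas it tends to +oo because the series of 1 - k diverges and M converges. *)
Lemma eventually_positive_to0 {m} {k : nat -> R} : (forall n, 0 <= k n <= 1) ->
  series (fun n => 1 - k n) @ \oo --> +oo ->
  (forall n, (1 <= n)%N -> x n.-1 != 0 -> 0 <= c n / x n.-1 <= k n) ->
  (forall n, (m <= n)%N -> 0 < x n) -> x @ \oo --> 0.
Proof.
move=> k01 k_div ratio_A2 Hx.
have cx := eventually_positive_cvg Hx.
suff L0 : limn x = 0 by rewrite -L0; exact: cx.
have Lge : 0 <= limn x.
  by apply: limr_ge => //; exists m => // n /= hn; exact/ltW/Hx.
apply/eqP; rewrite eq_le Lge andbT leNgt; apply/negP => Lp.
have L20 : 0 < limn x / 2 by lra.
have [N1 HN1] := cvgn_near_lim cx L20.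
set s := maxn m N1.
have above : forall n, (s <= n)%N -> limn x / 2 <= x n.
  move=> n hn; have h1 := HN1 n (leq_trans (leq_maxr _ _) hn).
  by have h2 := ler_norm (limn x - x n); lra.
have pot := A2_potential_nonincreasing k01 ratio_A2 L20 above.
set V := x s + _ - _ in pot.
have [B [N3 HB]] := cvgn_eventually_bounded M_cvg.
move/cvgryPgt: k_div => /(_ ((2 / limn x) * (V + B))) [N4 _ HN4].
set n := maxn s (maxn N3 N4).
have h1 := pot n (leq_maxl _ _).
have h2 := HB n (leq_trans (leq_maxl _ _) (leq_maxr _ _)).
have h3 := HN4 n.+1 (leqW (leq_trans (leq_maxr _ _) (leq_maxr _ _))).
have h4 := ler_norm (innov_sum x c n).
have xp : 0 < x n by apply: Hx; apply: leq_trans (leq_maxl _ _) (leq_maxl _ _).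
have h5 : limn x / 2 * ((2 / limn x) * (V + B)) <
          limn x / 2 * series (fun n => 1 - k n) n.+1 by rewrite ltr_pM2l.
have e : limn x / 2 * ((2 / limn x) * (V + B)) = V + B.
  by field; exact: lt0r_neq0.
rewrite e in h5; lra.
Qed.

(* If |U| is eventually below l + d for every d > 0, then every positive run
   opened by a late crossing stays below l + eta: it starts below
   |U| + |innovation|, and the Gronwall bound adds only a little on the run. *)
Lemma excursion_bound {l eta : R} : 0 <= l -> 0 < eta ->
  (forall d, 0 < d -> exists N, forall n, (N <= n)%N -> `|restart x c n| <= l + d) ->
  exists N, forall s n, (N <= s)%N -> (s <= n)%N -> sign_change x s ->
    (forall i, (s < i <= n)%N -> ~~ sign_change x i) -> 0 < x s -> x n <= l + eta.
Proof.
move=> l0 eta0 HU.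
set eps := eta / (6 + 2 * l + 2 * eta).
have den0 : 0 < 6 + 2 * l + 2 * eta by lra.
have eps0 : 0 < eps by rewrite divr_gt0.
have epsE : eps * (6 + 2 * l + 2 * eta) = eta by rewrite /eps divfK // gt_eqF.
clearbody eps.
have eps12 : eps < 1 / 2 by nra.
have [Nc HNc] := cvgn_cauchy M_cvg eps0.
have [Na HNa] := series_tail_small a_ge0 a_sum eps0.
have [Nu HNu] := HU eps eps0.
exists (maxn Nc (maxn Na Nu)).+1 => -[//|s] n hs hsn hcr hnc xs.
rewrite ltnS in hs.
have Nc_s : (Nc <= s)%N by apply: leq_trans hs; rewrite leq_maxl.
have Na_s : (Na <= s)%N.
  by apply: leq_trans hs; rewrite (leq_trans _ (leq_maxr _ _)) // leq_maxl.
have Nu_s : (Nu <= s.+1)%N.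
  by apply: leqW; apply: leq_trans hs; rewrite (leq_trans _ (leq_maxr _ _)) // leq_maxr.
have start := run_start_bound s xs (sign_change_into_pos hcr xs).
have small_innov : `|innov x c s.+1| <= eps.
  have -> : innov x c s.+1 = innov_sum x c s.+1 - innov_sum x c s.
    by rewrite innov_sumS; lra.
  by apply: HNc => //; apply: leqW.
have hU := HNu s.+1 Nu_s.
have run : x n <= (x s.+1 + eps) / (1 - eps).
  apply: (positive_run_bound s.+1 n eps eps (ltW eps0)) => //.
  - move=> k hk; apply: HNc => //; first exact: leqW.
    exact: leq_trans (leqW Nc_s) hk.
  - exact: ltW.
  - move=> k /andP[hk1 hk2].
    by have [p1 _ _] := sign_constant hnc k ltac:(by rewrite hk1 ltnW); apply: p1.
  - lra.
  - by move=> k hk; apply: HNa; apply: leqW; exact: leqW.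
  - by rewrite hsn leqnn.
apply: (le_trans run).
rewrite ler_pdivrMr; last by lra.
nra.
Qed.

End PositiveRuns.

Section SignSymmetry.
Context {R : realType}.
Variables (x c a : nat -> R).
Hypothesis a_ge0 : forall n, 0 <= a n.
Hypothesis ratio_A1 : forall n, (1 <= n)%N -> x n.-1 != 0 ->
  0 <= c n / x n.-1 <= 1 + a n.
Hypothesis a_sum : cvgn (series a).
Hypothesis M_cvg : cvgn (innov_sum x c).

(* The reflected path -x, with predictions -c, satisfies the same hypotheses
   and has the same crossings, so negative runs of x are positive runs of -x. *)
Let xr n := - x n.
Let cr n := - c n.

Let ratio_A1_reflected : forall n, (1 <= n)%N -> xr n.-1 != 0 ->
  0 <= cr n / xr n.-1 <= 1 + a n.
Proof. by move=> n hn; rewrite /xr /cr invrN mulrNN oppr_eq0; exact: ratio_A1. Qed.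

Let M_cvg_reflected : cvgn (innov_sum xr cr).
Proof.
have -> : innov_sum xr cr = - innov_sum x c.
  apply/funext => n; rewrite /innov_sum /innov /xr /cr.
  change (\sum_(1 <= i < n.+1) (- x i - - c i) =
    - \sum_(1 <= i < n.+1) (x i - c i)).
  by rewrite -sumrN; apply: eq_bigr => i _; lra.
exact: is_cvgN.
Qed.

Lemma finite_changes_cvg : finitely_many_changes x -> cvgn x.
Proof.
move=> [m /sign_eventually_constant sp].
case: (ltgtP (x m) 0) => hxm.
- have -> : x = - xr by apply/funext => n; rewrite /xr /= opprK.
  apply: is_cvgN; apply: (eventually_positive_cvg xr cr a a_ge0 ratio_A1_reflected
    a_sum M_cvg_reflected (m := m)) => n hn.
  by have [_ p2 _] := sp n hn; rewrite /xr oppr_gt0; exact: p2.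
- apply: (eventually_positive_cvg x c a a_ge0 ratio_A1 a_sum M_cvg (m := m)).
  by move=> n hn; have [p1 _ _] := sp n hn; exact: p1.
- apply/cvg_ex; exists 0; apply/cvgrPdist_le => e e0.
  exists m => // n /= hn; have [_ _ p3] := sp n hn.
  by rewrite p3 // subr0 normr0 ltW.
Qed.

Lemma finite_changes_to0 {k : nat -> R} : (forall n, 0 <= k n <= 1) ->
  series (fun n => 1 - k n) @ \oo --> +oo ->
  (forall n, (1 <= n)%N -> x n.-1 != 0 -> 0 <= c n / x n.-1 <= k n) ->
  finitely_many_changes x -> x @ \oo --> 0.
Proof.
move=> k01 k_div ratio_A2 [m /sign_eventually_constant sp].
case: (ltgtP (x m) 0) => hxm.
- have ratio_A2_reflected : forall n, (1 <= n)%N -> xr n.-1 != 0 ->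
      0 <= cr n / xr n.-1 <= k n.
    by move=> n hn; rewrite /xr /cr invrN mulrNN oppr_eq0; exact: ratio_A2.
  have xr0 : xr @ \oo --> 0.
    apply: (eventually_positive_to0 xr cr a a_ge0 ratio_A1_reflected a_sum
      M_cvg_reflected k01 k_div ratio_A2_reflected (m := m)) => n hn.
    by have [_ p2 _] := sp n hn; rewrite /xr oppr_gt0; exact: p2.
  apply/cvgrPdist_le => e e0; move/cvgrPdist_le : xr0 => /(_ e e0).
  by apply: filterS => n; rewrite /xr !sub0r !normrN.
- apply: (eventually_positive_to0 x c a a_ge0 ratio_A1 a_sum M_cvg k01 k_div
    ratio_A2 (m := m)) => n hn.
  by have [p1 _ _] := sp n hn; exact: p1.
- apply/cvgrPdist_le => e e0; exists m => // n /= hn; have [_ _ p3] := sp n hn.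
  by rewrite p3 // subr0 normr0 ltW.
Qed.

(* With infinitely many crossings, if |U| is eventually below l + d for every
   d > 0, then so is |x|: every late time lies in a run opened by a crossing. *)
Lemma infinite_changes_bound {l : R} : 0 <= l ->
  (forall d, 0 < d -> exists N, forall n, (N <= n)%N -> `|restart x c n| <= l + d) ->
  infinitely_many_changes x ->
  forall eta, 0 < eta -> exists N, forall n, (N <= n)%N -> `|x n| <= l + eta.
Proof.
move=> l0 HU Hinf eta eta0.
have HUr : forall d, 0 < d -> exists N, forall n, (N <= n)%N ->
    `|restart xr cr n| <= l + d.
  move=> d d0; have [N hN] := HU d d0; exists N => n hn.
  by rewrite /restart /cr /xr oppr_eq0 mulNr normrN; exact: hN.
have [N1 P1] := excursion_bound x c a a_ge0 ratio_A1 a_sum M_cvg l0 eta0 HU.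
have [N2 P2] := excursion_bound xr cr a a_ge0 ratio_A1_reflected a_sum
  M_cvg_reflected l0 eta0 HUr.
have [i /andP[hi hci]] := Hinf (maxn N1 N2).
exists i => n hn.
have [s [hs hsn hcs hnc]] := last_sign_change hci n hn.
have hN1 : (N1 <= s)%N.
  by apply: leq_trans (leq_maxl N1 N2) (leq_trans (ltnW hi) hs).
have hN2 : (N2 <= s)%N.
  by apply: leq_trans (leq_maxr N1 N2) (leq_trans (ltnW hi) hs).
have [p1 p2 p3] := sign_constant hnc n ltac:(by rewrite hsn leqnn).
case: (ltgtP (x s) 0) => hxs.
- have hnc' : forall j, (s < j <= n)%N -> ~~ sign_change xr j.
    by move=> j hj; rewrite sign_changeN; exact: hnc.
  have hcs' : sign_change xr s by rewrite sign_changeN.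
  have hxs' : 0 < xr s by rewrite /xr oppr_gt0.
  by have := P2 s n hN2 hsn hcs' hnc' hxs'; rewrite ltr0_norm // p2.
- by rewrite gtr0_norm ?p1 //; exact: (P1 s n hN1 hsn hcs hnc hxs).
- by rewrite p3 // normr0; lra.
Qed.

Lemma infinite_changes_limsup : infinitely_many_changes x ->
  (limn_esup (fun n => (`|x n|)%:E) <=
   limn_esup (fun n => (`|restart x c n|)%:E))%E.
Proof.
move=> inf; set v := (fun n => (`|restart x c n|)%:E).
have : (0 <= limn_esup v)%E by apply: limf_esup_ge0 => // n; rewrite lee_fin.
case E: (limn_esup v) => [l| |] l0; [|by rewrite leey|by []].
rewrite lee_fin in l0.
have HU : forall d, 0 < d -> exists N, forall n, (N <= n)%N ->
    `|restart x c n| <= l + d.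
  move=> d d0; have : (limn_esup v < (l + d)%:E)%E by rewrite E lte_fin; lra.
  move=> /limn_esup_lt_eventually [N hN]; exists N => n hn.
  by have := hN n hn; rewrite /v lee_fin.
apply/lee_addgt0Pr => eta eta0.
have [N hN] := infinite_changes_bound l0 HU inf eta eta0.
apply: (limn_esup_le_eventually N) => n hn.
by rewrite -EFinD lee_fin; exact: hN n hn.
Qed.

Lemma infinite_changes_to0 : infinitely_many_changes x ->
  restart x c @ \oo --> 0 -> x @ \oo --> 0.
Proof.
move=> inf U0.
have HU : forall d, 0 < d -> exists N, forall n, (N <= n)%N ->
    `|restart x c n| <= 0 + d.
  move=> d d0; move/cvgrPdist_le : U0 => /(_ d d0) [N _ hN].
  by exists N => n hn; have := hN n hn; rewrite sub0r normrN add0r.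
apply/cvgrPdist_le => e e0.
have [N hN] := infinite_changes_bound (lexx 0) HU inf e e0.
by exists N => // n /= hn; rewrite sub0r normrN; have := hN n hn; rewrite add0r.
Qed.

End SignSymmetry.

Lemma mulr_indic_in {T : Type} {R : realType} (A : set T) w (y : R) :
  A w -> y * \1_A w = y.
Proof. by move=> Aw; rewrite indicE mem_set // mulr1. Qed.

Lemma mulr_indic_out {T : Type} {R : realType} (A : set T) w (y : R) :
  ~ A w -> y * \1_A w = 0.
Proof. by move=> Aw; rewrite indicE memNset // mulr0. Qed.

Theorem theorem1 (d : measure_display) (T : measurableType d) (R : realType)
  (P : probability T R) (F : nat -> set (set T)) (X Ec : nat -> T -> R)
  (alpha : nat -> R) :
  filtration F ->
  (forall n, G_measurable (F n) (X n)) ->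
  (forall n, P.-integrable setT (EFin \o X n)) ->
  (forall n, (1 <= n)%N -> cond_exp_version P (F n.-1) (X n) (Ec n)) ->
  (* (A1) *)
  (forall n, 0 <= alpha n) -> cvgn (series alpha) ->
  {ae P, forall x, forall n, (1 <= n)%N -> X n.-1 x != 0 ->
      0 <= Ec n x / X n.-1 x <= 1 + alpha n} ->
  (* (A4) *)
  {ae P, forall x, cvgn (fun n => Msum X Ec n x)} ->
  [/\
   (* (i) *)
   {ae P, forall x,
      cvgn (fun n => X n x * \1_[set y | NT_finite X y] x)},
   (* (ii) *)
   (forall k : nat -> R, (forall n, 0 <= k n <= 1) ->
      series (fun n => 1 - k n) @ \oo --> +oo ->
      {ae P, forall x, forall n, (1 <= n)%N -> X n.-1 x != 0 ->
          0 <= Ec n x / X n.-1 x <= k n} ->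
      {ae P, forall x,
         (fun n => X n x * \1_[set y | NT_finite X y] x) @ \oo --> 0}),
   (* (iii) *)
   {ae P, forall x,
      (limn_esup (fun n => (`|X n x| * \1_[set y | ~ NT_finite X y] x)%:E)
        <= limn_esup (fun n => (`|Useq X Ec n x|)%:E))%E} &
   (* (iv) *)
   ({ae P, forall x, (fun n => Useq X Ec n x) @ \oo --> 0} ->
    {ae P, forall x,
       (fun n => X n x * \1_[set y | ~ NT_finite X y] x) @ \oo --> 0})].
Proof.
move=> _ _ _ _ a_ge0 a_sum A1 A4; split.
- move: A1 A4; apply: filterS2 => w A1w A4w.
  have [fin|inf] := pselect (NT_finite X w); last first.
    by under eq_fun do rewrite mulr_indic_out //; exact: is_cvg_cst.
  under eq_fun do rewrite mulr_indic_in //.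
  exact: (finite_changes_cvg (fun n => X n w) (fun n => Ec n w) alpha a_ge0 A1w
    a_sum A4w (NT_finite_changes fin)).
- move=> k k01 k_div A2; move: A1 A4 A2; apply: filterS3 => w A1w A4w A2w.
  have [fin|inf] := pselect (NT_finite X w); last first.
    by under eq_fun do rewrite mulr_indic_out //; exact: cvg_cst.
  under eq_fun do rewrite mulr_indic_in //.
  exact: (finite_changes_to0 (fun n => X n w) (fun n => Ec n w) alpha a_ge0 A1w
    a_sum A4w k01 k_div A2w (NT_finite_changes fin)).
- move: A1 A4; apply: filterS2 => w A1w A4w.
  have [fin|inf] := pselect (NT_finite X w).
    have nin : ~ [set y | ~ NT_finite X y] w by apply.
    under eq_fun do rewrite mulr_indic_out //.
    apply: (limn_esup_le_eventually 0) => n _.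
    by apply: limf_esup_ge0 => // m; rewrite lee_fin.
  under eq_fun do rewrite mulr_indic_in //.
  exact: (infinite_changes_limsup (fun n => X n w) (fun n => Ec n w) alpha a_ge0
    A1w a_sum A4w (not_NT_finite_changes inf)).
- move=> U0; move: A1 A4 U0; apply: filterS3 => w A1w A4w U0w.
  have [fin|inf] := pselect (NT_finite X w).
    have nin : ~ [set y | ~ NT_finite X y] w by apply.
    by under eq_fun do rewrite mulr_indic_out //; exact: cvg_cst.
  under eq_fun do rewrite mulr_indic_in //.
  exact: (infinite_changes_to0 (fun n => X n w) (fun n => Ec n w) alpha a_ge0
    A1w a_sum A4w (not_NT_finite_changes inf) U0w).
Qed.
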